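(* Let $G=(V,E)$ be a circular arc graph which is not an interval graph, let $M=(C,\mathcal A)$ be a circular arc model of $G$, let $p$ be a point of $C$, let $A$ be the set of vertices whose arcs contain $p$, and $B=V\setminus A$. Let $G'=(V,E')$ with $E'=E\cup\{\{u',v'\}: u',v'\in B,\ u'\ne v'\}$, and let $\{I_1',\dots,I_b'\}$ be a box representation of $G'$ of dimension $b=\mathrm{box}(G')$. Let $I$ be an interval representation of the subgraph of $G$ induced on $B$, and let $I'$ be the extension of $I$ on $V$. Then $\mathcal B=\{I_1',\dots,I_b',I'\}$ is a box representation of $G$ and $|\mathcal B|\le 2\,\mathrm{box}(G)+1$.
   Context: A circular arc model of $G$ consists of a circle $C$ and arcs of $C$, one per vertex, such that two vertices are adjacent iff their arcs intersect. An interval graph is the intersection graph of a finite family of intervals of the real line; an interval representation assigns to each vertex $u$ an interval $[l_u,r_u]$ (non-degenerate). A box representation of dimension $k$ of $G=(V,E)$ is a family of $k$ interval graphs $I_1,\dots,I_k$ on vertex set $V$ with $E=E(I_1)\cap\cdots\cap E(I_k)$; $\mathrm{box}(G)$ is the minimum such $k$. Extension: if $I$ is an interval representation of an interval graph on vertex set $W\subseteq V$, with $l=\min_{u\in W} l_u$ and $r=\max_{u\in W} r_u$, the extension of $I$ on $V$ is the interval representation on $V$ assigning $[l_u,r_u]$ to each $u\in W$ and $[l,r]$ to each $u\in V\setminus W$ (so every vertex of $V\setminus W$ is adjacent to all other vertices). *)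

From Stdlib Require Import Reals.
From mathcomp Require Import all_boot.

Set Implicit Arguments.
Unset Strict Implicit.
Unset Printing Implicit Defensive.

Local Open Scope R_scope.

Definition graph (V : Type) := V -> V -> Prop.

(* An interval representation assigns to each vertex u the interval [fst (f u), snd (f u)]. *)
Definition interval_rep (V : Type) := V -> (R * R).

Definition rep_valid_on (V : Type) (W : V -> Prop) (f : interval_rep V) : Prop :=
  forall u, W u -> fst (f u) < snd (f u).

Definition rep_valid (V : Type) (f : interval_rep V) : Prop :=
  rep_valid_on (fun _ => True) f.

Definition intervals_meet (V : Type) (f : interval_rep V) (u v : V) : Prop :=
  fst (f u) <= snd (f v) /\ fst (f v) <= snd (f u).

Definition rep_graph (V : Type) (f : interval_rep V) : graph V :=
  fun u v => u <> v /\ intervals_meet f u v.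

Definition is_interval_rep_on (V : Type) (W : V -> Prop) (E : graph V)
    (f : interval_rep V) : Prop :=
  rep_valid_on W f /\
  forall u v, W u -> W v -> u <> v -> (E u v <-> intervals_meet f u v).

Definition is_interval_graph (V : Type) (E : graph V) : Prop :=
  exists f : interval_rep V, rep_valid f /\
    forall u v, E u v <-> rep_graph f u v.

Definition box_rep (V : Type) (E : graph V) (Is : seq (graph V)) : Prop :=
  (forall I, List.In I Is -> is_interval_graph I) /\
  forall u v, u <> v -> (E u v <-> forall I, List.In I Is -> I u v).

Definition min_box_rep (V : Type) (E : graph V) (Is : seq (graph V)) : Prop :=
  box_rep E Is /\ forall Js, box_rep E Js -> (size Is <= size Js)%N.

(* The circle C is R/Z (circumference 1); a point of C is given by any real t.
   An arc is a pair (s, len): it starts at s and runs counterclockwise for length len,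
   with 0 < len < 1 (a non-degenerate proper closed arc). *)
Definition circ_arc := (R * R)%type.

Definition arc_valid (a : circ_arc) : Prop := 0 < snd a < 1.

Definition in_arc (t : R) (a : circ_arc) : Prop := frac_part (t - fst a) <= snd a.

Definition in_arc_b (t : R) (a : circ_arc) : bool :=
  if Rle_dec (frac_part (t - fst a)) (snd a) then true else false.

Definition arcs_meet (a b : circ_arc) : Prop := exists t : R, in_arc t a /\ in_arc t b.

Definition is_ca_model (V : Type) (E : graph V) (M : V -> circ_arc) : Prop :=
  (forall v, arc_valid (M v)) /\
  forall u v, u <> v -> (E u v <-> arcs_meet (M u) (M v)).

Definition is_simple_graph (V : Type) (E : graph V) : Prop :=
  (forall u, ~ E u u) /\ (forall u v, E u v -> E v u).

Definition is_circular_arc_graph (V : Type) (E : graph V) : Prop :=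
  exists M : V -> circ_arc, is_ca_model E M.

Definition seq_min (s : seq R) : R :=
  match s with [::] => 0 | x :: s' => foldr Rmin x s' end.
Definition seq_max (s : seq R) : R :=
  match s with [::] => 0 | x :: s' => foldr Rmax x s' end.

Definition extension (V : finType) (W : pred V) (f : interval_rep V) : interval_rep V :=
  fun u => if W u then f u
           else (seq_min [seq fst (f w) | w <- enum W],
                 seq_max [seq snd (f w) | w <- enum W]).

(** The interval graph [I'] makes every vertex outside [B] universal and
    agrees with [G] on [B]; [G'] agrees with [G] except on [B], where it is
    complete.  Hence [G] is the intersection of [G'] and [I'].  Conversely, a
    box representation of [G] of dimension [k] yields one of [G'] of
    dimension [2k]: each interval representation is split into two copies,
    one stretching the intervals of [B] to the far left, the other to the far
    right, and the two copies together add exactly the clique on [B].  So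
    [box(G') <= 2 box(G)].  Neither argument uses the circular-arc model: the
    statement holds for any graph and any vertex set [B]. *)

From Stdlib Require Import Reals Lra.
From mathcomp Require Import all_boot.

Set Implicit Arguments.
Unset Strict Implicit.

Local Open Scope R_scope.

Lemma foldr_Rmin_map_le (T : eqType) (h : T -> R) x0 s x :
  x \in x0 :: s -> foldr Rmin (h x0) (map h s) <= h x.
Proof.
elim: s x => [|a s IH] x /=; first by rewrite mem_seq1 => /eqP ->; apply: Rle_refl.
rewrite !in_cons => /or3P [/eqP -> | /eqP -> | xs].
- by apply: Rle_trans (Rmin_r _ _) (IH _ _); rewrite mem_head.
- exact: Rmin_l.
- by apply: Rle_trans (Rmin_r _ _) (IH _ _); rewrite in_cons xs orbT.
Qed.

Lemma foldr_Rmax_map_ge (T : eqType) (h : T -> R) x0 s x :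
  x \in x0 :: s -> h x <= foldr Rmax (h x0) (map h s).
Proof.
elim: s x => [|a s IH] x /=; first by rewrite mem_seq1 => /eqP ->; apply: Rle_refl.
rewrite !in_cons => /or3P [/eqP -> | /eqP -> | xs].
- by apply: Rle_trans (IH _ _) (Rmax_r _ _); rewrite mem_head.
- exact: Rmax_l.
- by apply: Rle_trans (IH _ _) (Rmax_r _ _); rewrite in_cons xs orbT.
Qed.

Lemma seq_min_map_le (T : eqType) (h : T -> R) s x :
  x \in s -> seq_min (map h s) <= h x.
Proof. by case: s => // x0 s; apply: foldr_Rmin_map_le. Qed.

Lemma seq_max_map_ge (T : eqType) (h : T -> R) s x :
  x \in s -> h x <= seq_max (map h s).
Proof. by case: s => // x0 s; apply: foldr_Rmax_map_ge. Qed.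

Lemma finite_lower_bound (V : finType) (h : V -> R) : exists L, forall u, L < h u.
Proof.
exists (seq_min (map h (enum V)) - 1) => u.
have : seq_min (map h (enum V)) <= h u by apply: seq_min_map_le; rewrite mem_enum.
lra.
Qed.

Lemma finite_upper_bound (V : finType) (h : V -> R) : exists U, forall u, h u < U.
Proof.
exists (seq_max (map h (enum V)) + 1) => u.
have : h u <= seq_max (map h (enum V)) by apply: seq_max_map_ge; rewrite mem_enum.
lra.
Qed.

Lemma In_rcons (T : Type) (s : seq T) x y : List.In y (rcons s x) <-> List.In y s \/ y = x.
Proof. by rewrite -cats1 List.in_app_iff /=; intuition. Qed.

Section BoxRepresentations.

Variable V : finType.

Definition add_clique (E : graph V) (B : pred V) : graph V :=
  fun u v => E u v \/ (B u /\ B v /\ u <> v).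

Definition graph_meet (Is : seq (graph V)) : graph V :=
  fun u v => forall I, List.In I Is -> I u v.

Lemma graph_meet_cons I Is u v :
  graph_meet (I :: Is) u v <-> I u v /\ graph_meet Is u v.
Proof.
rewrite /graph_meet; split => [H | [HI H] J /= [<- // | /H //]].
by split => [|J HJ]; apply: H; [left | right].
Qed.

Lemma graph_meet_rcons Is I u v :
  graph_meet (rcons Is I) u v <-> graph_meet Is u v /\ I u v.
Proof.
rewrite /graph_meet; split => [H | [H HI] J /In_rcons [/H // | -> //]].
by split => [J HJ|]; apply: H; apply/In_rcons; [left | right].
Qed.

Lemma box_repE E Is :
  box_rep E Is <->
  (forall I, List.In I Is -> is_interval_graph I) /\
  forall u v, u <> v -> (E u v <-> graph_meet Is u v).
Proof. by []. Qed.

Lemma interval_graph_split_clique (B : pred V) (J : graph V) :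
  is_interval_graph J ->
  exists K1 K2 : graph V, is_interval_graph K1 /\ is_interval_graph K2 /\
    forall u v, u <> v -> (K1 u v /\ K2 u v <-> add_clique J B u v).
Proof.
move=> [g [g_valid gJ]].
have [L HL] := finite_lower_bound (fun u => fst (g u)).
have [U HU] := finite_upper_bound (fun u => snd (g u)).
pose g1 u := if B u then (L, snd (g u)) else g u.
pose g2 u := if B u then (fst (g u), U) else g u.
have g1_valid : rep_valid g1.
  by move=> u _; rewrite /g1; case: (B u) => /=; have := g_valid u I; have := HL u; lra.
have g2_valid : rep_valid g2.
  by move=> u _; rewrite /g2; case: (B u) => /=; have := g_valid u I; have := HU u; lra.
have meet12 u v : intervals_meet g1 u v /\ intervals_meet g2 u v <->
                  (B u /\ B v) \/ intervals_meet g u v.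
  rewrite /intervals_meet /g1 /g2.
  have := HL u; have := HL v; have := HU u; have := HU v.
  have := g_valid u I; have := g_valid v I.
  by case: (B u); case: (B v) => /= *; split; intuition (first [lra | discriminate | done]).
exists (rep_graph g1), (rep_graph g2).
split; first by exists g1.
split; first by exists g2.
move=> u v uv; rewrite /add_clique gJ /rep_graph.
by have := meet12 u v; intuition.
Qed.

Lemma graph_meet_split_clique (B : pred V) Js :
  (forall J, List.In J Js -> is_interval_graph J) ->
  exists Ks, size Ks = (2 * size Js)%N /\
    (forall K, List.In K Ks -> is_interval_graph K) /\
    forall u v, u <> v -> (graph_meet Ks u v <-> add_clique (graph_meet Js) B u v).
Proof.
elim: Js => [|J Js IH] Js_int.
  by exists [::]; do 2 split => //; rewrite /add_clique /graph_meet /=; intuition.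
have [Ks [size_Ks [Ks_int KsE]]] := IH (fun J' HJ' => Js_int J' (or_intror HJ')).
have [K1 [K2 [K1_int [K2_int K12E]]]] :=
  interval_graph_split_clique B (Js_int J (or_introl erefl)).
exists [:: K1, K2 & Ks]; split; first by rewrite /= size_Ks mulnS.
split; first by move=> K /= [<- | [<- | HK]]; [| | exact: Ks_int].
move=> u v uv; rewrite !graph_meet_cons KsE //.
have := K12E u v uv; rewrite /add_clique graph_meet_cons; intuition.
Qed.

Lemma box_rep_add_clique (B : pred V) E Js :
  box_rep E Js ->
  exists Ks, size Ks = (2 * size Js)%N /\ box_rep (add_clique E B) Ks.
Proof.
move=> /box_repE [Js_int JsE].
have [Ks [size_Ks [Ks_int KsE]]] := graph_meet_split_clique B Js_int.
exists Ks; split => //; apply/box_repE; split => // u v uv.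
by rewrite KsE // /add_clique JsE.
Qed.

Definition ext_lo (B : pred V) (f : interval_rep V) : R :=
  seq_min [seq fst (f w) | w <- enum B].
Definition ext_hi (B : pred V) (f : interval_rep V) : R :=
  seq_max [seq snd (f w) | w <- enum B].

Lemma extensionE B f u :
  extension B f u = if B u then f u else (ext_lo B f, ext_hi B f).
Proof. by []. Qed.

Lemma extension_bounds (B : pred V) f :
  rep_valid_on B f ->
  (forall v, B v -> ext_lo B f <= fst (f v) /\ snd (f v) <= ext_hi B f) /\
  ext_lo B f <= ext_hi B f.
Proof.
move=> f_valid.
have bounds v : B v -> ext_lo B f <= fst (f v) /\ snd (f v) <= ext_hi B f.
  move=> Bv; have vB : v \in enum B by rewrite mem_enum.
  by split; [apply: (seq_min_map_le (fun w => fst (f w)))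
            | apply: (seq_max_map_ge (fun w => snd (f w)))].
split => //; case: (pickP B) => [w Bw | noB].
  by have := bounds w Bw; have := f_valid w Bw; lra.
by rewrite /ext_lo /ext_hi (eq_enum noB) enum0 /=; lra.
Qed.

Lemma intervals_meet_hull (B : pred V) f g :
  rep_valid_on B f ->
  (forall u, B u -> g u = f u) ->
  (forall u, ~~ B u -> fst (g u) <= ext_lo B f /\ ext_hi B f <= snd (g u)) ->
  forall u v, intervals_meet g u v <-> (B u -> B v -> intervals_meet f u v).
Proof.
move=> f_valid g_on_B g_off_B u v.
have [bounds lo_hi] := extension_bounds f_valid.
have in_hull w : B w ->
    ext_lo B f <= fst (g w) /\ fst (g w) < snd (g w) /\ snd (g w) <= ext_hi B f.
  by move=> Bw; rewrite g_on_B //; have := bounds w Bw; have := f_valid w Bw; lra.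
rewrite /intervals_meet; case Bu: (B u); case Bv: (B v).
- by rewrite !g_on_B //; split => [H _ _ | /(_ isT isT)].
all: split => // _.
all: move: (in_hull u) (in_hull v) (g_off_B u) (g_off_B v); rewrite Bu Bv /=.
all: have T : true by [].
all: by intuition lra.
Qed.

Lemma intervals_meet_extension (B : pred V) f :
  rep_valid_on B f ->
  forall u v, intervals_meet (extension B f) u v <-> (B u -> B v -> intervals_meet f u v).
Proof.
move=> f_valid; apply: intervals_meet_hull => // w; rewrite extensionE.
- by move=> ->.
- by move=> /negPf ->; split; apply: Rle_refl.
Qed.

Lemma interval_graph_extension (B : pred V) f :
  rep_valid_on B f -> is_interval_graph (rep_graph (extension B f)).
Proof.
move=> f_valid; have [_ lo_hi] := extension_bounds f_valid.
(* The extension itself is degenerate outside [B] when [ext_lo = ext_hi]. *)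
pose g u := if B u then f u else (ext_lo B f, ext_hi B f + 1).
exists g; split.
  by move=> u _; rewrite /g; case Bu: (B u); [exact: f_valid | rewrite /=; lra].
move=> u v; rewrite /rep_graph intervals_meet_extension //.
rewrite (intervals_meet_hull f_valid (g := g)) //.
  by move=> w; rewrite /g => ->.
by move=> w; rewrite /g => /negPf -> /=; split; [apply: Rle_refl | lra].
Qed.

Lemma box_rep_rcons_extension (B : pred V) E f Is :
  is_interval_rep_on (fun v => B v) E f ->
  box_rep (add_clique E B) Is ->
  box_rep E (rcons Is (rep_graph (extension B f))).
Proof.
move=> [f_valid fE] /box_repE [Is_int IsE]; apply/box_repE; split.
  by move=> I /In_rcons [/Is_int // | ->]; exact: interval_graph_extension.
move=> u v uv; rewrite graph_meet_rcons -IsE // /add_clique /rep_graph.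
rewrite intervals_meet_extension //.
have := fE u v; case: (B u); case: (B v) => /= HE.
  by have := HE isT isT uv; intuition.
all: by intuition discriminate.
Qed.

End BoxRepresentations.

Local Close Scope R_scope.

Theorem lemma7 (V : finType) (E : graph V) (M : V -> circ_arc) (p : R)
  (Is' : seq (graph V)) (f : interval_rep V) :
  is_simple_graph E ->
  is_ca_model E M ->
  ~ is_interval_graph E ->
  let A : pred V := fun v => in_arc_b p (M v) in
  let B : pred V := fun v => ~~ A v in
  let E' : graph V := fun u v => E u v \/ (B u /\ B v /\ u <> v) in
  min_box_rep E' Is' ->
  is_interval_rep_on (fun v => B v) E f ->
  let I' := extension B f in
  let calB := rcons Is' (rep_graph I') in
  box_rep E calB /\
  (forall Js, box_rep E Js -> (size calB <= 2 * size Js + 1)%N).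
Proof.
move=> _ _ _ A B E' [Is'_box Is'_min] f_rep I' calB.
split; first exact: box_rep_rcons_extension.
move=> Js /(box_rep_add_clique B) [Ks [size_Ks Ks_box]].
by rewrite size_rcons -size_Ks addn1 ltnS; apply: Is'_min.
Qed.
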